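(* Let $\mathcal{Q}=\{\mathcal{Q}^1,\dots,\mathcal{Q}^M\}$ be a set of $M$ pairwise distinct valid token sequences, and run beam search of width $M$ on the language model under grounded constrained decoding with respect to $\mathcal{Q}$. Then the set of complete sequences returned by the beam search is exactly $\{\mathcal{Q}^1,\dots,\mathcal{Q}^M\}$.
   Context: An autoregressive language model has a finite vocabulary $\mathcal{V}$ containing an end-of-sequence token $\langle eos\rangle$; given a prefix $(t_0,\dots,t_i)$ (possibly empty) it outputs logits $(\ell_{i+1}^{(x)})_{x\in\mathcal{V}}$, all finite real numbers. Each valid sequence $\mathcal{Q}^k=(n_0,\dots,n_{Q_k})\in\mathcal{V}^{Q_k+1}$ has variable length and contains $\langle eos\rangle$ exactly once, as its last token; $\mathcal{Q}^k_{0:j}$ denotes its length-$j$ prefix. Grounded constrained decoding: after prefix $(t_0,\dots,t_i)$, the valid-next-token set is $M_{i+1}=\{t\in\mathcal{V}:\exists k,\ \mathcal{Q}^k_{0:i+2}=(t_0,\dots,t_i,t)\}$ (for the empty prefix, the set of first tokens of the $\mathcal{Q}^k$); masked logits are $\tilde\ell_{i+1}^{(x)}=\ell_{i+1}^{(x)}$ if $x\in M_{i+1}$ and $-\infty$ otherwise; the constrained next-token probability $\tilde p(\cdot\mid t_0,\dots,t_i)$ is their softmax with $\exp(-\infty)=0$ (all probabilities $0$ if $M_{i+1}=\emptyset$); the constrained probability $\tilde p$ of a sequence is the product of its constrained conditional next-token probabilities. A sequence is complete if it ends in $\langle eos\rangle$. Beam search of width $M$: start from the empty hypothesis; at each step,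 every incomplete hypothesis is extended by every token of $\mathcal{V}$, complete hypotheses are carried over unchanged, hypotheses with constrained probability $0$ are discarded, and among the remaining ones the (at most) $M$ with the highest constrained probability are kept; the procedure stops when all kept hypotheses are complete and returns them. *)

From HB Require Import structures.
From mathcomp Require Import all_boot all_order all_algebra.
From mathcomp Require Import reals sequences exp.
Set Implicit Arguments. Unset Strict Implicit. Unset Printing Implicit Defensive.
Import Order.TTheory GRing.Theory Num.Theory.
Local Open Scope ring_scope.

Section Beam.
Variables (R : realType) (V : finType) (eos : V).
(* language model: prefix (t_0,...,t_i) |-> logits for the next token *)
Variable lm : seq V -> V -> R.
Variable Q : seq (seq V).

Definition valid_seq (q : seq V) : bool :=
  (q != [::]) && (last eos q == eos) && (count_mem eos q == 1%N).

Definition complete (h : seq V) : bool := (h != [::]) && (last eos h == eos).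

Definition valid_next (p : seq V) : pred V :=
  fun t => has (fun q => take (size p).+1 q == rcons p t) Q.

Definition cprob (p : seq V) (x : V) : R :=
  if x \in valid_next p then
    expR (lm p x) / \sum_(y <- enum V | y \in valid_next p) expR (lm p y)
  else 0.

Definition seq_prob (h : seq V) : R :=
  \prod_(i < size h) cprob (take i h) (nth eos h i).

Definition candidates (B : seq (seq V)) : seq (seq V) :=
  [seq h <- flatten [seq (if complete h then [:: h]
                          else [seq rcons h x | x <- enum V]) | h <- B]
   | seq_prob h != 0].

(* one beam-search step of width w: keep (at most) w candidates of highest
   constrained probability (any tie-breaking allowed) *)
Definition beam_step (w : nat) (B B' : seq (seq V)) : Prop :=
  exists rest : seq (seq V),
    [/\ perm_eq (candidates B) (B' ++ rest),
        size B' = minn w (size (candidates B)) &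
        forall x y, x \in B' -> y \in rest -> seq_prob y <= seq_prob x].

End Beam.

(* After n steps the beam is exactly the set of length-n prefixes of the
   sequences of Q (for n = 0, the empty hypothesis).  Indeed, under the
   grounded mask a hypothesis has positive probability iff it is such a
   prefix; proper prefixes of valid sequences are incomplete, while a prefix
   that is complete is the whole sequence and is carried over unchanged.  So
   the candidates of step n are the length-(n+1) prefixes, of which there are
   at most M: the beam keeps all of them.  Once n exceeds every length, all
   prefixes are the sequences of Q themselves, all complete. *)
From HB Require Import structures.
From mathcomp Require Import all_boot all_order all_algebra.
From mathcomp Require Import reals sequences exp.
From mathcomp Require Import zify.
Set Implicit Arguments. Unset Strict Implicit. Unset Printing Implicit Defensive.
Import Order.TTheory GRing.Theory Num.Theory.
Local Open Scope ring_scope.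

Lemma uniq_flatten_map (T1 T2 : eqType) (f : T1 -> seq T2) (s : seq T1) :
  uniq s -> {in s, forall x, uniq (f x)} ->
  (forall x y z, x \in s -> y \in s -> z \in f x -> z \in f y -> x = y) ->
  uniq (flatten (map f s)).
Proof.
elim: s => //= a s IH /andP [a_s us] uf disj.
rewrite cat_uniq uf ?mem_head // IH //; last 2 first.
- by move=> x xs; rewrite uf // inE xs orbT.
- by move=> x y z xs ys; apply: disj; rewrite inE ?xs ?ys orbT.
rewrite andbT; apply/hasP => -[z /flatten_mapP [y ys zy] za].
have ay : a = y by apply: (disj a y z) => //; rewrite inE ?eqxx ?ys ?orbT.
by move: a_s; rewrite ay ys.
Qed.

Section ValidSequences.
Variables (V : finType) (eos : V).

Lemma complete_mem_eos h : complete eos h -> eos \in h.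
Proof. by case: h => // a s /andP [_ /eqP <-] /=; exact: mem_last. Qed.

Lemma valid_complete q : valid_seq eos q -> complete eos q.
Proof. by case/andP => /andP [q_nil q_last] _; rewrite /complete q_nil q_last. Qed.

Lemma valid_take_incomplete q k : valid_seq eos q -> (k < size q)%N ->
  ~~ complete eos (take k q).
Proof.
case/andP=> /andP [_ q_last] /eqP count_eos k_lt; apply/negP => /complete_mem_eos.
have drop_complete : complete eos (drop k q).
  have : drop k q != [::] by rewrite -size_eq0 size_drop subn_eq0 -ltnNge.
  rewrite -(cat_take_drop k q) last_cat in q_last.
  by case: (drop k q) q_last.
move: count_eos (complete_mem_eos drop_complete).
rewrite -[q in count_mem _ q](cat_take_drop k q) count_cat.
by rewrite -!has_pred1 !has_count; lia.
Qed.

Lemma valid_take_complete q k : valid_seq eos q -> complete eos (take k q) ->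
  take k q = q.
Proof.
move=> vq ck; case: (ltnP k (size q)) => k_lt; last exact: take_oversize.
by move: ck; rewrite (negbTE (valid_take_incomplete vq k_lt)).
Qed.

End ValidSequences.

Section GroundedBeam.
Variables (R : realType) (V : finType) (eos : V) (lm : seq V -> V -> R)
  (Q : seq (seq V)).
Hypothesis validQ : all (valid_seq eos) Q.

Local Notation seq_prob := (seq_prob eos lm Q).
Local Notation cprob := (cprob lm Q).
Local Notation complete := (complete eos).
Local Notation candidates := (candidates eos lm Q).

Lemma seq_prob_nil : seq_prob [::] = 1.
Proof. by rewrite /seq_prob big_ord0. Qed.

Lemma seq_prob_rcons p t : seq_prob (rcons p t) = seq_prob p * cprob p t.
Proof.
rewrite /seq_prob size_rcons big_ord_recr /= -cats1 take_size_cat //.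
rewrite nth_cat ltnn subnn; congr (_ * _); apply: eq_bigr => i _.
by rewrite nth_cat (ltn_ord i) takel_cat //; exact: ltnW.
Qed.

Lemma cprob_neq0 p t : (cprob p t != 0) = (t \in valid_next Q p).
Proof.
rewrite /cprob; case: ifP => vt; last by rewrite eqxx.
rewrite mulf_neq0 ?(gt_eqF (expR_gt0 _)) // invr_neq0 // psumr_neq0.
  by apply/hasP; exists t; rewrite ?mem_enum // vt expR_gt0.
by move=> y _; rewrite ltW ?expR_gt0.
Qed.

Lemma seq_prob_take_neq0 q k : q \in Q -> seq_prob (take k q) != 0.
Proof.
move=> qQ; elim: k => [|k IH]; first by rewrite take0 seq_prob_nil oner_eq0.
case: (ltnP k (size q)) => k_lt.
  rewrite (take_nth eos k_lt) seq_prob_rcons mulf_neq0 // cprob_neq0.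
  by apply/hasP; exists q; rewrite // size_take k_lt -take_nth.
by rewrite take_oversize ?leqW // -(take_oversize k_lt).
Qed.

(* At n = 0 the beam is the empty hypothesis even when Q is empty. *)
Definition frontier (n : nat) : seq (seq V) :=
  if n is 0 then [:: [::]] else undup [seq take n q | q <- Q].

Lemma frontier_uniq n : uniq (frontier n).
Proof. by case: n => [|n] //=; exact: undup_uniq. Qed.

Lemma size_frontier_succ n : (size (frontier n.+1) <= size Q)%N.
Proof. by rewrite (leq_trans (size_undup _)) ?size_map. Qed.

Lemma take_mem_frontier q n : q \in Q -> take n q \in frontier n.
Proof. by case: n => [|n] qQ; rewrite ?take0 ?mem_head // mem_undup map_f. Qed.

Lemma mem_frontier n h : h \in frontier n ->
  [/\ (size h <= n)%N, ~~ complete h -> size h = n & complete h -> h \in Q].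
Proof.
case: n => [|n]; first by rewrite inE => /eqP ->.
rewrite mem_undup => /mapP [q qQ ->]; have vq := allP validQ q qQ.
rewrite size_take; split; first by case: ltnP.
  by case: ltnP => // le; rewrite take_oversize // valid_complete.
by move=> /(valid_take_complete vq) ->.
Qed.

Lemma frontier_complete n : all complete (frontier n) -> frontier n =i Q.
Proof.
move=> /allP all_c h; apply/idP/idP => [hF|hQ].
  by case: (mem_frontier hF) => _ _; apply; exact: all_c.
have vh := allP validQ h hQ; have hF := take_mem_frontier n hQ.
by rewrite -(valid_take_complete vh (all_c _ hF)).
Qed.

Lemma frontier_eventually_complete n :
  (\max_(q <- Q) size q < n)%N -> all complete (frontier n).
Proof.
case: n => // n max_lt; apply/allP => h; rewrite mem_undup => /mapP [q qQ ->].
rewrite take_oversize ?(valid_complete (allP validQ q qQ)) //.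
exact: leq_trans (leq_bigmax_seq _ qQ _) (ltnW max_lt).
Qed.

Definition extend (h : seq V) : seq (seq V) :=
  if complete h then [:: h] else [seq rcons h t | t <- enum V].

Lemma candidatesE B :
  candidates B = [seq h <- flatten (map extend B) | seq_prob h != 0].
Proof. by []. Qed.

Lemma extend_take n h z : h \in frontier n -> z \in extend h -> take n z = h.
Proof.
case/mem_frontier=> size_h incomplete_h _; rewrite /extend.
case: ifP => [_|/negbT/incomplete_h <-]; first by rewrite inE => /eqP ->; exact: take_oversize.
by case/mapP=> t _ ->; rewrite -cats1 take_size_cat.
Qed.

Lemma candidates_uniq n B : perm_eq B (frontier n) -> uniq (candidates B).
Proof.
move=> BF; rewrite candidatesE filter_uniq //; apply: uniq_flatten_map.
- by rewrite (perm_uniq BF) frontier_uniq.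
- move=> h _; rewrite /extend; case: ifP => // _.
  by rewrite map_inj_uniq ?enum_uniq // => s t /rcons_inj [].
- move=> x y z; rewrite !(perm_mem BF) => xF yF zx zy.
  by rewrite -(extend_take xF zx) (extend_take yF zy).
Qed.

Lemma mem_candidates n B : perm_eq B (frontier n) -> candidates B =i frontier n.+1.
Proof.
move=> BF z; rewrite candidatesE mem_filter mem_undup; apply/andP/mapP.
  case=> z_prob /flatten_mapP [h]; rewrite (perm_mem BF) => hF.
  case/mem_frontier: (hF) => size_h incomplete_h complete_h; rewrite /extend.
  case: ifP => [/complete_h hQ|/negbT/incomplete_h size_h_eq].
    by rewrite inE => /eqP ->; exists h; rewrite // take_oversize // leqW.
  case/mapP=> t _ z_eq; move: z_prob; rewrite z_eq seq_prob_rcons mulf_eq0 negb_or.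
  case/andP=> _; rewrite cprob_neq0 => /hasP [q qQ /eqP].
  by rewrite size_h_eq => <-; exists q.
case=> q qQ ->; split; first exact: seq_prob_take_neq0.
apply/flatten_mapP; exists (take n q); first by rewrite (perm_mem BF) take_mem_frontier.
rewrite /extend; case: (ltnP n (size q)) => n_lt.
  rewrite (negbTE (valid_take_incomplete (allP validQ q qQ) n_lt)).
  by rewrite (take_nth eos n_lt) map_f ?mem_enum.
by rewrite !take_oversize ?valid_complete ?inE ?(allP validQ) // leqW.
Qed.

Lemma beam_step_keeps_all w B B' : (size (candidates B) <= w)%N ->
  beam_step eos lm Q w B B' -> perm_eq (candidates B) B'.
Proof.
move=> few [rest [cand_perm size_B' _]].
have rest_nil : rest = [::].
  apply/nilP; rewrite /nilp; move: (perm_size cand_perm).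
  by rewrite size_cat size_B' (minn_idPr few) -{1}[size _]addn0 => /addnI <-.
by rewrite rest_nil cats0 in cand_perm.
Qed.

Lemma beam_step_frontier n B B' : perm_eq B (frontier n) ->
  beam_step eos lm Q (size Q) B B' -> perm_eq B' (frontier n.+1).
Proof.
move=> BF step; have cand_F : perm_eq (candidates B) (frontier n.+1).
  apply: uniq_perm; first exact: candidates_uniq BF.
    exact: frontier_uniq.
  exact: mem_candidates.
rewrite -(permPr cand_F) perm_sym (beam_step_keeps_all _ step) //.
by rewrite (perm_size cand_F) size_frontier_succ.
Qed.

End GroundedBeam.

Theorem lemma1p3 (R : realType) (V : finType) (eos : V)
    (lm : seq V -> V -> R) (Q : seq (seq V)) :
  uniq Q -> all (valid_seq eos) Q ->
  forall B : nat -> seq (seq V),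
    B 0%N = [:: [::]] ->
    (forall n, ~~ all (complete eos) (B n) ->
       beam_step eos lm Q (size Q) (B n) (B n.+1)) ->
    exists n : nat,
      [/\ all (complete eos) (B n),
          (forall m, (m < n)%N -> ~~ all (complete eos) (B m)) &
          B n =i Q].
Proof.
move=> _ validQ B B0 step; pose stopped m := all (complete eos) (B m).
have beam_frontier n : (forall m, (m < n)%N -> ~~ stopped m) -> perm_eq (B n) (frontier Q n).
  elim: n => [_|n IH running]; first by rewrite B0.
  have B_n : perm_eq (B n) (frontier Q n).
    by apply: IH => m m_lt; rewrite running // ltnW.
  by have := beam_step_frontier validQ B_n (step _ (running n (ltnSn n))).
have [N stopped_N] : exists N, stopped N.
  pose N0 := (\max_(q <- Q) size q).+1.
  case: (boolP [exists m : 'I_N0, stopped m]) => [/existsP [m] | /existsPn none]; first by exists m.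
  exists N0; rewrite /stopped (perm_all _ (beam_frontier N0 _)).
    exact: frontier_eventually_complete.
  by move=> m m_lt; exact: none (Ordinal m_lt).
have [n stopped_n first_n] := ex_minnP (ex_intro stopped N stopped_N).
have running m : (m < n)%N -> ~~ stopped m.
  by move=> m_lt; apply/negP => /first_n; rewrite leqNgt m_lt.
have BF := beam_frontier n running; exists n; split=> // h.
rewrite (perm_mem BF) (frontier_complete validQ) //.
by rewrite -(perm_all _ BF).
Qed.
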